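(* Let $G$ and $H$ be word-representable graphs with representation numbers $k_1$ and $k_2$, respectively. Then $G\,\square\,H$ is $(k_1 + k_2 + \min\{|G|,|H|\})$-representable.
   Context: All graphs are simple and undirected; $|G|$ denotes the number of vertices of $G$. Letters $x,y$ alternate in a word $w$ if deleting all other letters from $w$ yields $xyxy\ldots$ or $yxyx\ldots$ (of either parity). A word $w$ over $V(G)$ represents $G$ if every vertex occurs in $w$ and for all distinct $x,y$, $xy\in E(G)$ iff $x,y$ alternate in $w$. A word is $k$-uniform if each of its letters occurs exactly $k$ times; $G$ is $k$-representable if it is represented by some $k$-uniform word; the representation number of a word-representable graph $G$ is the least $k$ such that $G$ is $k$-representable. The Cartesian product $G\,\square\,H$ has vertex set $V(G)\times V(H)$, with $(u,v)$ adjacent to $(u',v')$ iff either $u=u'$ and $vv'\in E(H)$, or $v=v'$ and $uu'\in E(G)$. *)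

From mathcomp Require Import all_boot.
Set Implicit Arguments. Unset Strict Implicit. Unset Printing Implicit Defensive.

Definition alt_seq (T : Type) (x y : T) (n : nat) : seq T :=
  mkseq (fun i => if odd i then y else x) n.

Definition alternate (T : eqType) (w : seq T) (x y : T) : bool :=
  let s := filter (fun z => (z == x) || (z == y)) w in
  (s == alt_seq x y (size s)) || (s == alt_seq y x (size s)).

Definition represents (T : finType) (E : rel T) (w : seq T) : Prop :=
  (forall x : T, x \in w) /\
  (forall x y : T, x != y -> (E x y <-> alternate w x y)).

Definition uniform (T : eqType) (k : nat) (w : seq T) : Prop :=
  forall x, x \in w -> count_mem x w = k.

Definition k_representable (T : finType) (E : rel T) (k : nat) : Prop :=
  exists w : seq T, uniform k w /\ represents E w.

Definition word_representable (T : finType) (E : rel T) : Prop :=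
  exists w : seq T, represents E w.

Definition representation_number (T : finType) (E : rel T) (k : nat) : Prop :=
  k_representable E k /\ forall k', k_representable E k' -> k <= k'.

Definition cart_rel (T1 T2 : finType) (E1 : rel T1) (E2 : rel T2) : rel (T1 * T2) :=
  fun p q => ((p.1 == q.1) && E2 p.2 q.2) || ((p.2 == q.2) && E1 p.1 q.1).

From mathcomp Require Import all_boot.
Set Implicit Arguments. Unset Strict Implicit. Unset Printing Implicit Defensive.

(* Let u and v be k1- and k2-uniform words representing G and H, and eG, eH their letters listed
   once.  The word W is v with each letter y replaced by the column eG x {y}, followed by u with
   each letter x replaced by the row {x} x eH, followed by eG^|G| cut into singletons and
   rotations of eG, each chunk c replaced by the grid c x eH; every vertex occurs in W exactly
   k1 + k2 + |G| times.  Restricted to a row {g} x H, W reads v padded by copies of eH, and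
   restricted to a column G x {h} it reads u padded by copies of eG; since the restrictions of
   u and v to two letters are (xy)^k, the padding preserves alternation, so adjacency in rows
   and columns is inherited from v and u.  Two vertices differing in both coordinates never
   alternate: according to the order in which they first occur in u and v, two consecutive
   copies of one of them appear either where the column part meets the row part, or between a
   singleton chunk and the rotation following it.  Exchanging the factors gives min(|G|,|H|). *)

Definition alternating (T : eqType) (s : seq T) : bool := sorted (fun a b => a != b) s.

Lemma alternating_map_inv (T T' : eqType) (f : T -> T') (s : seq T) :
  alternating (map f s) -> alternating s.
Proof.
rewrite /alternating sorted_map; apply: sub_sorted => a b /=.
by apply: contra => /eqP ->.
Qed.

Definition alt_pairs (T : Type) (a b : T) (n : nat) : seq T :=
  flatten (nseq n [:: a; b]).

Section TwoLetters.
Variable T : eqType.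
Implicit Types (s t : seq T) (a b x : T).

Lemma alternating_catl s t : alternating (s ++ t) -> alternating s.
Proof. by case/cat_sorted2. Qed.

Lemma alternating_catr s t : alternating (s ++ t) -> alternating t.
Proof. by case/cat_sorted2. Qed.

Lemma alternating_dup s x t : alternating (s ++ x :: x :: t) = false.
Proof. by apply/negP => /alternating_catr /=; rewrite eqxx. Qed.

Lemma alt_pairsD a b m n : alt_pairs a b (m + n) = alt_pairs a b m ++ alt_pairs a b n.
Proof. by rewrite /alt_pairs nseqD flatten_cat. Qed.

Lemma alternating_alt_pairs a b n : a != b -> alternating (alt_pairs a b n).
Proof.
move=> ab; have path_b m : path (fun c d => c != d) b (alt_pairs a b m).
  by elim: m => //= m ->; rewrite eq_sym ab.
by case: n => //= n; rewrite ab path_b.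
Qed.

Lemma map_alt_pairs (T' : Type) (f : T -> T') a b n :
  map f (alt_pairs a b n) = alt_pairs (f a) (f b) n.
Proof. by rewrite /alt_pairs map_flatten map_nseq. Qed.

Lemma undup_alt_pairs a b n : a != b -> undup (alt_pairs a b n.+1) = [:: a; b].
Proof. by move=> ab; rewrite undup_flatten_nseq //= inE (negbTE ab). Qed.

Lemma alt_pairs_of_alternating s a b : a != b -> all (pred2 a b) s -> alternating s ->
  count_mem a s = count_mem b s -> head a s = a -> s = alt_pairs a b (count_mem a s).
Proof.
move=> ab; have [n] := ubnP (size s); elim: n s => // n IHn [|x [|y s]] //= size_s.
- by move=> _ _ + xa; subst x; rewrite eqxx (negbTE ab).
move=> /and3P[_ /orP[/eqP-> | /eqP->] s_ab] /andP[xy path_s] + x_a; subst x.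
  by rewrite eqxx in xy.
rewrite !eqxx eq_sym (negbTE ab) /= => count_s.
congr [:: _, _ & _]; apply: IHn => //.
- by move: size_s; rewrite !ltnS => /ltnW.
- exact: (path_sorted path_s).
- by case: count_s.
case: s s_ab path_s {size_s count_s} => //= z s /andP[/orP[] /eqP -> _] /andP[] //.
by rewrite eqxx.
Qed.

Lemma alternating_balanced s a b : a != b -> all (pred2 a b) s -> alternating s ->
  count_mem a s = count_mem b s ->
  s = alt_pairs a b (count_mem a s) \/ s = alt_pairs b a (count_mem a s).
Proof.
move=> ab s_ab alt_s count_s; case: s => [|x s'] in s_ab alt_s count_s *; first by left.
have /orP[/eqP xa | /eqP xb] := allP s_ab x (mem_head _ _).
  by left; apply: alt_pairs_of_alternating; rewrite //= xa.
right; rewrite count_s; apply: alt_pairs_of_alternating; rewrite 1?eq_sym //=.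
by apply: sub_all s_ab => z; rewrite /= orbC.
Qed.

Lemma alternating_alt_pairs_cat a b m n t : 0 < m -> 0 < n ->
  alternating (alt_pairs a b m ++ alt_pairs b a n ++ t) = false.
Proof.
case: m n => [|m] [|n] // _ _; rewrite -addn1 alt_pairsD -catA /=.
by rewrite -cat_rcons alternating_dup.
Qed.

End TwoLetters.

Lemma alt_seqS (T : Type) (x y : T) n : alt_seq x y n.+1 = x :: alt_seq y x n.
Proof.
rewrite /alt_seq /mkseq /= -add1n iotaDl -map_comp.
by congr (_ :: _); apply: eq_map => i /=; case: (odd i).
Qed.

Section Alternate.
Variable T : eqType.
Implicit Types (u w : seq T) (a b x y : T).

Lemma path_neq_alt_seq a b s : a != b -> all (pred2 a b) s ->
  path (fun c d => c != d) a s = (s == alt_seq b a (size s)).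
Proof.
elim: s a b => [|z s IHs] a b ab //= /andP[/orP[/eqP-> | /eqP->] s_ab].
  by rewrite alt_seqS eqseq_cons eqxx (negbTE ab).
rewrite alt_seqS eqseq_cons ab !eqxx /= (IHs b a) 1?eq_sym //.
by apply: sub_all s_ab => t; rewrite /= orbC.
Qed.

Lemma alternateE w x y : x != y -> alternate w x y = alternating (filter (pred2 x y) w).
Proof.
move=> xy; rewrite /alternate.
have : all (pred2 x y) (filter (pred2 x y) w) by apply: filter_all.
case: (filter _ w) => [|z s] //= /andP[/orP[/eqP-> | /eqP->] s_xy].
  by rewrite !alt_seqS !eqseq_cons eqxx (negbTE xy) orbF (path_neq_alt_seq xy s_xy).
rewrite /= !alt_seqS !eqseq_cons eqxx eq_sym (negbTE xy) /= (@path_neq_alt_seq y x) 1?eq_sym //.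
by apply: sub_all s_xy => t; rewrite /= orbC.
Qed.

Lemma alternate_filter (P : pred T) w x y : P x -> P y ->
  alternate (filter P w) x y = alternate w x y.
Proof.
move=> Px Py; rewrite /alternate -filter_predI.
rewrite (eq_filter (a2 := fun z => (z == x) || (z == y))) // => z /=.
by case: orP => [[]/eqP-> | _]; rewrite ?Px ?Py ?andbT ?andbF.
Qed.

Lemma alternate_map (T' : eqType) (f : T -> T') w x y : injective f ->
  alternate (map f w) (f x) (f y) = alternate w x y.
Proof.
move=> f_inj; rewrite /alternate filter_map size_map.
rewrite (eq_filter (a2 := fun z => (z == x) || (z == y))); last first.
  by move=> z; rewrite /= !(inj_eq f_inj).
have map_alt_seq a b n : alt_seq (f a) (f b) n = map f (alt_seq a b n).
  by rewrite /alt_seq /mkseq -map_comp; apply: eq_map => i /=; case: (odd i).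
by rewrite !map_alt_seq !(inj_eq (inj_map f_inj)).
Qed.

Lemma alternate_balanced w x y : x != y -> count_mem x w = count_mem y w -> alternate w x y ->
  filter (pred2 x y) w = alt_pairs x y (count_mem x w) \/
  filter (pred2 x y) w = alt_pairs y x (count_mem x w).
Proof.
move=> xy count_w; rewrite alternateE // => alt_w.
have count_filter2 z : pred2 x y z -> count_mem z (filter (pred2 x y) w) = count_mem z w.
  move=> xy_z; rewrite count_filter; apply: eq_count => t /=.
  by case: eqP => // ->.
rewrite -(count_filter2 x) /= ?eqxx //.
apply: alternating_balanced => //; first exact: filter_all.
by rewrite !count_filter2 //= eqxx ?orbT.
Qed.

Lemma alternate_undup_pad u x y m n : x != y -> count_mem x u = count_mem y u ->
  alternate (flatten (nseq m (undup u)) ++ u ++ flatten (nseq n (undup u))) x y =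
  alternate u x y.
Proof.
move=> xy count_u; rewrite !alternateE // !filter_cat.
apply/idP/idP => [/alternating_catr/alternating_catl // | alt_u].
have filter_pad k : filter (pred2 x y) (flatten (nseq k (undup u))) =
                    flatten (nseq k (undup (filter (pred2 x y) u))).
  by rewrite filter_flatten map_nseq filter_undup.
rewrite !filter_pad.
suff pad_alt_pairs a b : a != b -> filter (pred2 x y) u = alt_pairs a b (count_mem x u) ->
    alternating (flatten (nseq m (undup (filter (pred2 x y) u))) ++ filter (pred2 x y) u ++
                 flatten (nseq n (undup (filter (pred2 x y) u)))).
  have [] := alternate_balanced xy count_u; first by rewrite alternateE.
    exact: pad_alt_pairs.
  by apply: pad_alt_pairs; rewrite eq_sym.
move=> ab ->; case: (count_mem x u) => [|k].
  by rewrite /=; elim: m => //=; elim: n.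
by rewrite undup_alt_pairs // -!alt_pairsD alternating_alt_pairs.
Qed.

Lemma filter_undup_alt_pairs u a b k : a != b -> 0 < k ->
  filter (pred2 a b) u = alt_pairs a b k -> filter (pred2 a b) (undup u) = [:: a; b].
Proof.
by move=> ab + u_ab; rewrite filter_undup {}u_ab; case: k => // k _; rewrite undup_alt_pairs.
Qed.

End Alternate.

Lemma flatten_nseq_if (A B : Type) (P : pred A) (s : seq B) (t : seq A) :
  flatten [seq (if P x then s else [::]) | x <- t] = flatten (nseq (count P t) s).
Proof. by elim: t => //= x t IHt; case: (P x); rewrite /= IHt. Qed.

Lemma count_flatten_nseq (A : Type) (P : pred A) n (s : seq A) :
  count P (flatten (nseq n s)) = n * count P s.
Proof. by rewrite count_flatten map_nseq sumn_nseq mulnC. Qed.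

Definition row_word (T1 T2 : eqType) (g : T1) (W : seq (T1 * T2)) : seq T2 :=
  [seq p.2 | p <- W & p.1 == g].
Definition col_word (T1 T2 : eqType) (h : T2) (W : seq (T1 * T2)) : seq T1 :=
  [seq p.1 | p <- W & p.2 == h].

Lemma row_word_swap (T1 T2 : eqType) (g : T1) (W : seq (T2 * T1)) :
  row_word g (map swap_pair W) = col_word g W.
Proof. by rewrite /row_word /col_word filter_map -map_comp. Qed.

Lemma col_word_swap (T1 T2 : eqType) (h : T2) (W : seq (T2 * T1)) :
  col_word h (map swap_pair W) = row_word h W.
Proof. by rewrite /row_word /col_word filter_map -map_comp. Qed.

Section RowsAndColumns.
Variables T1 T2 : eqType.
Implicit Types (W : seq (T1 * T2)) (g : T1) (h : T2).

Lemma row_word_cat g W W' : row_word g (W ++ W') = row_word g W ++ row_word g W'.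
Proof. by rewrite /row_word filter_cat map_cat. Qed.

Lemma col_word_cat h W W' : col_word h (W ++ W') = col_word h W ++ col_word h W'.
Proof. by rewrite /col_word filter_cat map_cat. Qed.

Lemma row_word_flatten g (Ws : seq (seq (T1 * T2))) :
  row_word g (flatten Ws) = flatten (map (row_word g) Ws).
Proof. by rewrite /row_word filter_flatten map_flatten -map_comp. Qed.

Lemma col_word_flatten h (Ws : seq (seq (T1 * T2))) :
  col_word h (flatten Ws) = flatten (map (col_word h) Ws).
Proof. by rewrite /col_word filter_flatten map_flatten -map_comp. Qed.

Lemma alternate_row_word W g x y : alternate W (g, x) (g, y) = alternate (row_word g W) x y.
Proof.
rewrite -(alternate_filter W (P := fun p => p.1 == g)) //.
have pair_inj : injective (@pair T1 T2 g) by move=> a b [].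
rewrite -(alternate_map _ _ _ pair_inj); congr alternate.
rewrite /row_word -map_comp -[LHS]map_id; apply/eq_in_map => -[a b].
by rewrite mem_filter /= => /andP[/eqP-> _].
Qed.

Lemma count_col_word W g h : count_mem (g, h) W = count_mem g (col_word h W).
Proof.
rewrite count_map count_filter; apply: eq_count => -[a b] /=.
by rewrite xpair_eqE andbC.
Qed.

End RowsAndColumns.

Lemma alternate_col_word (T1 T2 : eqType) (W : seq (T1 * T2)) (h : T2) (x y : T1) :
  alternate W (x, h) (y, h) = alternate (col_word h W) x y.
Proof.
rewrite -(alternate_map W (x, h) (y, h) (can_inj (@swap_pairK T1 T2))).
by rewrite (alternate_row_word _ h x y) row_word_swap.
Qed.

Lemma filter_pred1_uniqE (T : eqType) (s : seq T) x : uniq s ->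
  filter (pred1 x) s = if x \in s then [:: x] else [::].
Proof.
move=> s_uniq; have /all_pred1P -> := filter_all (pred1 x) s.
by rewrite size_filter count_uniq_mem //; case: (x \in s).
Qed.

Lemma filter_pred2C (T : eqType) (a b : T) (s : seq T) :
  filter (pred2 a b) s = filter (pred2 b a) s.
Proof. by apply: eq_filter => z; rewrite /= orbC. Qed.

Lemma filter_pred2_split (T : eqType) (e : seq T) x y : uniq e ->
  filter (pred2 x y) e = [:: x; y] -> exists e1 e2, e = e1 ++ x :: e2 /\ y \in e2.
Proof.
move=> e_uniq e_xy; have : x \in filter (pred2 x y) e by rewrite e_xy mem_head.
rewrite mem_filter => /andP[_ /splitPr e_split]; case: e_split e_uniq e_xy => e1 e2.
rewrite cat_uniq filter_cat /= eqxx /= => /and3P[_ /norP[x_e1 _] _].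
case: (filter _ e1) (filter_all (pred2 x y) e1) (mem_filter (pred2 x y) x e1)
  => [|z [|z' s]] //=.
- move=> _ _ [e2_y]; exists e1, e2; split=> //.
  by have := mem_head y [::]; rewrite -e2_y mem_filter => /andP[].
- by rewrite (negbTE x_e1) andbF => _ + [z_x]; rewrite z_x mem_head.
- by move=> _ _ [_ _]; case: s.
Qed.

Definition grid (T1 T2 : Type) (c : seq T1) (v : seq T2) : seq (T1 * T2) :=
  flatten [seq [seq (x, y) | x <- c] | y <- v].

Section Grid.
Variables T1 T2 : eqType.
Implicit Types (c : seq T1) (v : seq T2) (g : T1) (h : T2).

Lemma row_word_grid g c v : uniq c -> row_word g (grid c v) = if g \in c then v else [::].
Proof.
move=> c_uniq; rewrite row_word_flatten -map_comp.
under eq_map => y do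
  rewrite /= /row_word filter_map -map_comp [filter _ c](filter_pred1_uniqE _ c_uniq).
by case: (g \in c); [rewrite flatten_seq1 | elim: v].
Qed.

Lemma col_word_grid h c v : col_word h (grid c v) = flatten (nseq (count_mem h v) c).
Proof.
rewrite col_word_flatten -map_comp -flatten_nseq_if; congr flatten; apply: eq_map => y /=.
rewrite /col_word filter_map -map_comp map_id_in ?(eq_filter (a2 := fun=> y == h)) //.
  by case: (y == h); [rewrite filter_predT | rewrite filter_pred0].
Qed.

Lemma filter_grid g g' h h' c v : uniq c -> h != h' ->
  filter (pred2 (g, h) (g', h')) (grid c v) =
  [seq (if y == h then (g, h) else (g', h')) |
     y <- v & ((y == h) && (g \in c)) || ((y == h') && (g' \in c))].
Proof.
move=> c_uniq hh'; elim: v => //= y v IHv; rewrite filter_cat {}IHv filter_map.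
have [-> | yh] := eqVneq y h.
  rewrite (negbTE hh') /= orbF.
  rewrite (eq_filter (a2 := pred1 g)) ?filter_pred1_uniqE //; last first.
    by move=> x; rewrite /= !xpair_eqE eqxx (negbTE hh') andbT andbF orbF.
  by case: (g \in c); rewrite /= ?eqxx.
have [-> | yh'] := eqVneq y h'.
  rewrite (eq_filter (a2 := pred1 g')) ?filter_pred1_uniqE //; last first.
    by move=> x; rewrite /= !xpair_eqE eqxx [h' == h]eq_sym (negbTE hh') andbT andbF.
  by case: (g' \in c); rewrite /= ?eqxx // [h' == h]eq_sym (negbTE hh').
rewrite (eq_filter (a2 := pred0)) ?filter_pred0 // => x.
by rewrite /= !xpair_eqE (negbTE yh) (negbTE yh') !andbF.
Qed.

End Grid.

(* For e = x1 x2 ... xn, chunks e is [x1], [x2 ... xn x1], [x2], [x3 ... xn x1 x2], ..., [xn]: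
   singletons alternating with rotations of e, so that the chunks concatenate to e^n. *)
Fixpoint rot_chunks (T : Type) (p s : seq T) : seq (seq T) :=
  if s is x :: s' then
    [:: x] :: (if s' is [::] then [::] else (s' ++ p ++ [:: x]) :: rot_chunks (rcons p x) s')
  else [::].

Definition chunks (T : Type) (e : seq T) : seq (seq T) := rot_chunks [::] e.

Lemma flatten_rot_chunks (T : Type) (p s : seq T) :
  flatten (rot_chunks p s) = s ++ flatten (nseq (size s).-1 (p ++ s)).
Proof.
elim: s p => [|x [|y s] IHs] p //=.
have := IHs (rcons p x); rewrite /= => ->.
by rewrite cat_rcons -!catA.
Qed.

Lemma flatten_chunks (T : Type) (e : seq T) : flatten (chunks e) = flatten (nseq (size e) e).
Proof. by rewrite /chunks flatten_rot_chunks; case: e. Qed.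

Lemma chunks_uniq (T : eqType) (e c : seq T) : uniq e -> c \in chunks e -> uniq c.
Proof.
suff rot_uniq p s : uniq (p ++ s) -> c \in rot_chunks p s -> uniq c by apply: (rot_uniq [::]).
elim: s p => [|x s IHs] p //= ps_uniq.
rewrite inE => /predU1P[-> // |]; case: s IHs ps_uniq => [|y s] IHs ps_uniq //.
rewrite inE => /predU1P[-> | ]; first by rewrite uniq_catC -catA.
by apply: IHs; rewrite cat_rcons.
Qed.

Lemma chunks_cat (T : Type) (e1 e2 : seq T) x : 0 < size e2 ->
  exists c1 c2, chunks (e1 ++ x :: e2) = c1 ++ [:: x] :: (e2 ++ e1 ++ [:: x]) :: c2.
Proof.
move=> e2_gt0; suff rot_cat p : exists c1 c2,
    rot_chunks p (e1 ++ x :: e2) = c1 ++ [:: x] :: (e2 ++ p ++ e1 ++ [:: x]) :: c2.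
  exact: rot_cat [::].
elim: e1 p => [|y e1 IHe1] p.
  by case: e2 e2_gt0 => // z e2 _; exists [::], (rot_chunks (rcons p x) (z :: e2)).
have [c1 [c2 E]] := IHe1 (rcons p y).
exists ([:: y] :: ((e1 ++ x :: e2) ++ p ++ [:: y]) :: c1), c2.
have -> : rot_chunks p ((y :: e1) ++ x :: e2) =
    [:: y] :: ((e1 ++ x :: e2) ++ p ++ [:: y]) :: rot_chunks (rcons p y) (e1 ++ x :: e2).
  by case: e1 {E IHe1}.
by rewrite E cat_rcons.
Qed.

Definition chunks_grid (T1 T2 : Type) (e : seq T1) (f : seq T2) : seq (T1 * T2) :=
  flatten [seq grid c f | c <- chunks e].

Definition prod_word (T1 T2 : eqType) (u : seq T1) (v : seq T2) : seq (T1 * T2) :=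
  grid (undup u) v ++ map swap_pair (grid (undup v) u) ++ chunks_grid (undup u) (undup v).

Section ProductWord.
Variables (T1 T2 : eqType) (u : seq T1) (v : seq T2).
Implicit Types (g : T1) (h : T2).

Lemma row_word_prod_word g : g \in u ->
  exists r, row_word g (prod_word u v) = v ++ flatten (nseq r (undup v)).
Proof.
move=> gu; exists (count_mem g u + count (fun c => g \in c) (chunks (undup u))).
have row_chunk c : c \in chunks (undup u) ->
    row_word g (grid c (undup v)) = if g \in c then undup v else [::].
  by move=> c_chunk; rewrite row_word_grid // (chunks_uniq (undup_uniq u) c_chunk).
rewrite nseqD flatten_cat !row_word_cat row_word_grid ?undup_uniq // mem_undup gu.
rewrite row_word_swap col_word_grid row_word_flatten -map_comp.
rewrite (_ : map _ _ = [seq (if g \in c then undup v else [::]) | c <- chunks (undup u)]).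
  by rewrite flatten_nseq_if.
by apply/eq_in_map => c /row_chunk.
Qed.

Lemma col_word_prod_word h : h \in v ->
  col_word h (prod_word u v) =
  flatten (nseq (count_mem h v) (undup u)) ++ u ++ flatten (nseq (size (undup u)) (undup u)).
Proof.
move=> hv; rewrite !col_word_cat col_word_grid col_word_swap row_word_grid ?undup_uniq //.
rewrite mem_undup hv col_word_flatten -map_comp -flatten_chunks.
rewrite (_ : map _ _ = chunks (undup u)) // -[RHS]map_id; apply: eq_map => c /=.
by rewrite col_word_grid count_uniq_mem ?undup_uniq // mem_undup hv /= cats0.
Qed.

Lemma count_prod_word g h : g \in u -> h \in v ->
  count_mem (g, h) (prod_word u v) = count_mem h v + count_mem g u + size (undup u).
Proof.
move=> gu hv; rewrite count_col_word col_word_prod_word // !count_cat !count_flatten_nseq.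
by rewrite (count_uniq_mem g (undup_uniq u)) mem_undup gu !muln1 addnA.
Qed.

Lemma alternate_prod_word_row g h h' : g \in u -> h != h' -> count_mem h v = count_mem h' v ->
  alternate (prod_word u v) (g, h) (g, h') = alternate v h h'.
Proof.
move=> gu hh' count_v; rewrite alternate_row_word; have [r ->] := row_word_prod_word gu.
by rewrite -[v ++ _]/(flatten (nseq 0 (undup v)) ++ v ++ _) alternate_undup_pad.
Qed.

Lemma alternate_prod_word_col g g' h : h \in v -> g != g' -> count_mem g u = count_mem g' u ->
  alternate (prod_word u v) (g, h) (g', h) = alternate u g g'.
Proof.
by move=> hv gg' count_u; rewrite alternate_col_word col_word_prod_word // alternate_undup_pad.
Qed.

Lemma filter_prod_word g g' h h' :
  g != g' -> h != h' -> g \in u -> g' \in u -> h \in v -> h' \in v ->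
  filter (pred2 (g, h) (g', h')) (prod_word u v) =
  [seq (if y == h then (g, h) else (g', h')) | y <- filter (pred2 h h') v] ++
  [seq (if x == g then (g, h) else (g', h')) | x <- filter (pred2 g g') u] ++
  filter (pred2 (g, h) (g', h')) (chunks_grid (undup u) (undup v)).
Proof.
move=> gg' hh' gu g'u hv h'v; rewrite !filter_cat filter_grid ?undup_uniq // !mem_undup gu g'u.
rewrite (eq_filter (a2 := pred2 h h')) => [|y]; last by rewrite !andbT.
congr (_ ++ _ ++ _); rewrite filter_map (eq_filter (a2 := pred2 (h, g) (h', g'))); last first.
  by case=> y x; rewrite /= !xpair_eqE andbC [(x == g') && _]andbC.
rewrite filter_grid ?undup_uniq // !mem_undup hv h'v -map_comp.
rewrite (eq_filter (a2 := pred2 g g')) => [|x]; last by rewrite !andbT.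
by apply: eq_map => x /=; case: (x == g).
Qed.

Lemma chunks_grid_not_alternating g g' h h' : g != g' -> h != h' ->
  filter (pred2 g g') (undup u) = [:: g; g'] -> filter (pred2 h h') (undup v) = [:: h; h'] ->
  ~~ alternating (filter (pred2 (g, h) (g', h')) (chunks_grid (undup u) (undup v))).
Proof.
move=> gg' hh' eG_gg' eH_hh'.
(* The chunk [g] contributes (g, h), and the rotation following it contributes (g, h) (g', h'). *)
have [e1 [e2 [eG_split g'_e2]]] := filter_pred2_split (undup_uniq u) eG_gg'.
have e2_gt0 : 0 < size e2 by case: (e2) g'_e2.
have [c1 [c2 chunks_eG]] := chunks_cat e1 g e2_gt0.
set c := e2 ++ e1 ++ [:: g] in chunks_eG.
have c_uniq : uniq c.
  apply: (chunks_uniq (undup_uniq u)).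
  by rewrite eG_split chunks_eG mem_cat !inE eqxx !orbT.
have hH : h \in undup v.
  by have := mem_head h [:: h']; rewrite -eH_hh' mem_filter => /andP[].
rewrite /chunks_grid eG_split chunks_eG map_cat flatten_cat /= !filter_cat.
rewrite !filter_grid ?undup_uniq // mem_seq1 eqxx mem_seq1 [g' == g]eq_sym (negbTE gg').
rewrite (eq_filter (a2 := pred1 h)) => [|y]; last by rewrite /= andbT andbF orbF.
rewrite filter_pred1_uniq ?undup_uniq // /c !mem_cat !inE eqxx g'_e2 !orbT.
rewrite (eq_filter (a2 := pred2 h h')) => [|y]; last by rewrite /= !andbT.
by rewrite eH_hh' /= eqxx [h' == h]eq_sym (negbTE hh') alternating_dup.
Qed.

Lemma prod_word_not_alternate g g' h h' :
  g != g' -> h != h' -> g \in u -> g' \in u -> h \in v -> h' \in v ->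
  count_mem g u = count_mem g' u -> count_mem h v = count_mem h' v ->
  ~~ alternate (prod_word u v) (g, h) (g', h').
Proof.
move=> gg' hh' gu g'u hv h'v count_u count_v.
have pq : (g, h) != (g', h') by rewrite xpair_eqE negb_and gg'.
rewrite alternateE // filter_prod_word //; apply/negP => alt_W.
have alt_v : alternate v h h'.
  by rewrite alternateE //; apply: alternating_map_inv (alternating_catl alt_W).
have alt_u : alternate u g g'.
  by rewrite alternateE //; apply: alternating_map_inv (alternating_catl (alternating_catr alt_W)).
have count_gt0 (T : eqType) (x : T) s : x \in s -> 0 < count_mem x s.
  by rewrite -has_count has_pred1.
have h'h : (h' == h) = false by rewrite eq_sym (negbTE hh').
have g'g : (g' == g) = false by rewrite eq_sym (negbTE gg').
(* The restrictions of v to {h, h'} and of u to {g, g'} are (hh')^k2 or (h'h)^k2 and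
   (gg')^k1 or (g'g)^k1; in each of the four cases W restricted to {(g, h), (g', h')} repeats
   a letter. *)
have [v_hh' | v_h'h] := alternate_balanced hh' count_v alt_v;
  have [u_gg' | u_g'g] := alternate_balanced gg' count_u alt_u;
  rewrite ?v_hh' ?v_h'h ?u_gg' ?u_g'g !map_alt_pairs /= !eqxx h'h g'g in alt_W.
- apply/negP: (alternating_catr (alternating_catr alt_W)).
  apply: chunks_grid_not_alternating => //.
    exact: filter_undup_alt_pairs gg' (count_gt0 _ _ _ gu) u_gg'.
  exact: filter_undup_alt_pairs hh' (count_gt0 _ _ _ hv) v_hh'.
- by move: alt_W; rewrite alternating_alt_pairs_cat // count_gt0.
- by move: alt_W; rewrite alternating_alt_pairs_cat // count_gt0.
rewrite filter_pred2C in v_h'h; rewrite filter_pred2C in u_g'g.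
apply/negP: (alternating_catr (alternating_catr alt_W)); rewrite filter_pred2C.
apply: chunks_grid_not_alternating; rewrite 1?eq_sym //.
  exact: filter_undup_alt_pairs (negbT g'g) (count_gt0 _ _ _ gu) u_g'g.
exact: filter_undup_alt_pairs (negbT h'h) (count_gt0 _ _ _ hv) v_h'h.
Qed.

End ProductWord.

Lemma size_undup_full (T : finType) (s : seq T) :
  (forall x, x \in s) -> size (undup s) = #|T|.
Proof.
move=> s_full; have /card_uniqP <- := undup_uniq s; apply: eq_card => x.
by rewrite mem_undup s_full.
Qed.

Section CartesianProduct.
Variables (T1 T2 : finType) (E1 : rel T1) (E2 : rel T2) (k1 k2 : nat).
Variables (u : seq T1) (v : seq T2).
Hypotheses (u_unif : uniform k1 u) (u_rep : represents E1 u).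
Hypotheses (v_unif : uniform k2 v) (v_rep : represents E2 v).

Lemma prod_word_uniform : uniform (k1 + k2 + #|T1|) (prod_word u v).
Proof.
case: u_rep v_rep => [u_full _] [v_full _] [g h] _.
by rewrite count_prod_word // u_unif // v_unif // size_undup_full // [k2 + k1]addnC.
Qed.

Lemma prod_word_represents : represents (cart_rel E1 E2) (prod_word u v).
Proof.
case: u_rep v_rep => [u_full E1_u] [v_full E2_v].
split=> [[g h] | [g h] [g' h'] ne].
  by rewrite -has_pred1 has_count count_prod_word // -addnA ltn_addr // -has_count has_pred1.
have count_u x : count_mem x u = k1 by apply: u_unif.
have count_v y : count_mem y v = k2 by apply: v_unif.
rewrite /cart_rel /=; case: (eqVneq g g') ne => [<- | gg'] ne.
  have hh' : h != h' by move: ne; rewrite xpair_eqE eqxx.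
  rewrite (negbTE hh') /= orbF alternate_prod_word_row ?count_v //.
  exact: E2_v.
have [<- | hh'] := eqVneq h h'.
  by rewrite /= alternate_prod_word_col ?count_u //; apply: E1_u.
split=> // alt_W.
by move/negP: (prod_word_not_alternate gg' hh' (u_full g) (u_full g') (v_full h) (v_full h')
  (etrans (count_u g) (esym (count_u g'))) (etrans (count_v h) (esym (count_v h')))).
Qed.

End CartesianProduct.

Lemma cart_k_representable (T1 T2 : finType) (E1 : rel T1) (E2 : rel T2) k1 k2 :
  k_representable E1 k1 -> k_representable E2 k2 ->
  k_representable (cart_rel E1 E2) (k1 + k2 + #|T1|).
Proof.
move=> [u [u_unif u_rep]] [v [v_unif v_rep]]; exists (prod_word u v).
split; first exact: prod_word_uniform u_unif u_rep v_unif v_rep.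
exact: prod_word_represents u_unif u_rep v_unif v_rep.
Qed.

Lemma k_representable_bij (T T' : finType) (E : rel T) (E' : rel T') (f : T -> T') k :
  bijective f -> (forall x y, E' (f x) (f y) = E x y) ->
  k_representable E k -> k_representable E' k.
Proof.
case=> f' fK f'K E'_f [w [w_unif [w_full E_w]]]; have f_inj := can_inj fK.
exists (map f w); split; [|split].
- move=> x' _; rewrite -(f'K x') count_map -(w_unif (f' x')) //.
  by apply: eq_count => x; rewrite /= (inj_eq f_inj).
- by move=> x'; rewrite -(f'K x') mem_map.
- move=> x' y'; rewrite -(f'K x') -(f'K y') (inj_eq f_inj) alternate_map // E'_f.
  exact: E_w.
Qed.

Theorem mainTheorem8 (T1 T2 : finType) (E1 : rel T1) (E2 : rel T2) (k1 k2 : nat) :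
  symmetric E1 -> irreflexive E1 -> symmetric E2 -> irreflexive E2 ->
  word_representable E1 -> word_representable E2 ->
  representation_number E1 k1 -> representation_number E2 k2 ->
  k_representable (cart_rel E1 E2) (k1 + k2 + minn #|T1| #|T2|).
Proof.
move=> _ _ _ _ _ _ [E1_k1 _] [E2_k2 _].
have [_ | _] := leqP #|T1| #|T2|; first exact: cart_k_representable.
rewrite [k1 + k2]addnC.
apply: (k_representable_bij (f := swap_pair)) (cart_k_representable E2_k2 E1_k1).
  exact: (Bijective swap_pairK swap_pairK).
by move=> [a b] [c d]; rewrite /cart_rel /= orbC.
Qed.
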